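(* Let $I$, $\tilde I$, $h$, $h_A$ and the rules $\Rightarrow_t$, $\Rightarrow_e$ (for an arbitrary choice of nonempty witness sets) be as in the context. Let $\tilde\pi=\tilde s_1\to\tilde s_2\to\cdots\to\tilde s_n$ be a path in $\tilde I$ whose edges are temporal transitions $\tilde s_k\xrightarrow{\tilde\alpha_{k+1}}\tilde s_{k+1}$ or epistemic transitions $\tilde s_k\sim_a\tilde s_{k+1}$. If $st_1\subseteq h^{-1}(\tilde s_1)$ and $(\tilde\pi,st_1)\Rightarrow^*(\tilde s_n,st_n)$ with $st_n\neq\emptyset$, then there is a sequence of concrete states $s_1,\dots,s_n$ with $s_1\in st_1$, $s_n\in st_n$, $h(s_k)=\tilde s_k$ for all $k$, such that for each edge: if it is $\tilde s_k\xrightarrow{\tilde\alpha_{k+1}}\tilde s_{k+1}$ then $\tau(\alpha_{k+1},s_k)=s_{k+1}$ for some $\alpha_{k+1}$ with $h_A(\alpha_{k+1})=\tilde\alpha_{k+1}$, and if it is $\tilde s_k\sim_a\tilde s_{k+1}$ then $l_a(s_k)=l_a(s_{k+1})$ and $s_{k+1}$ is reachable in $I$.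
   Context: $I$ and $\tilde I$ are interpreted systems over the same agents (global states $S,\tilde S$ with $l_a(s)$ the local state of agent $a$; initial states $S_0,\tilde S_0$; partial transition functions $\tau,\tilde\tau$); a state of $I$ is reachable if obtained from $S_0$ by finitely many transitions. $h:S\to\tilde S$ and $h_A:ACT\to\widetilde{ACT}$ are given functions. For $st\subseteq S$ let $L_a(st)=\{l_a(s)\mid s\in st\}$ and $\Theta_\alpha(st)=\{\tau(\alpha,s)\mid s\in st,\ \tau(\alpha,s)\text{ defined}\}$. Paths in $\tilde I$ are written with first edge followed by the rest: $e\,\|\,\pi$; a path of length zero is a state. Rule TemporalCheck: $(\tilde s\xrightarrow{\tilde\alpha}\tilde s'\,\|\,\pi,st)\Rightarrow_t(\pi,\bigcup_{\alpha\in h_A^{-1}(\tilde\alpha)}\Theta_\alpha(st)\cap h^{-1}(\tilde s'))$; $\Rightarrow_t^*$ is a finite sequence of such steps. Rule EpistemicCheck: for each abstract state $\tilde s'$ fix a nonempty set $W_{\tilde s'}$ of witness paths, each a temporal path $\pi'=\tilde s'_0\xrightarrow{\tilde\alpha'_1}\cdots\xrightarrow{\tilde\alpha'_m}\tilde s'$ of $\tilde I$ with $\tilde s'_0\in\tilde S_0$; let $st'=\bigcup_{\pi'\in W_{\tilde s'}}\{X\mid (\pi',S_0\cap h^{-1}(\tilde s'_0))\Rightarrow_t^*(\tilde s',X)\}$; then $(\tilde s\sim_a\tilde s'\,\|\,\pi,st)\Rightarrow_e(\pi,\hat{st})$ where $\hat{st}=\{s\in st'\mid l_a(s)\in L_a(st)\}$.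 $\Rightarrow^*$ denotes a finite sequence of $\Rightarrow_t$ and $\Rightarrow_e$ steps. *)

From Stdlib Require Import List.
Import ListNotations.
Set Implicit Arguments.

Record IS (Ag : Type) := mkIS {
  St : Type;
  Loc : Type;
  Act : Type;
  loc : Ag -> St -> Loc;
  init : St -> Prop;
  tr : Act -> St -> option St
}.
Arguments St {Ag} i.
Arguments Loc {Ag} i.
Arguments Act {Ag} i.
Arguments loc {Ag} i _ _.
Arguments init {Ag} i _.
Arguments tr {Ag} i _ _.

Inductive reachable {Ag} (I : IS Ag) : St I -> Prop :=
| reach_init : forall s, init I s -> reachable I s
| reach_step : forall s a s', reachable I s -> tr I a s = Some s' -> reachable I s'.

Section Paths.
Context {Ag : Type} (J : IS Ag).

Inductive edge : Type :=
| ETemp (a : Act J) (t : St J)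
| EEpi (ag : Ag) (t : St J).

Definition edge_target (e : edge) : St J :=
  match e with ETemp _ t => t | EEpi _ t => t end.

(* A path: a first state followed by a list of edges; a path with no edges is a state. *)
Record path := mkPath { pstart : St J; pedges : list edge }.

Definition plast (p : path) : St J :=
  fold_left (fun _ e => edge_target e) (pedges p) (pstart p).

Fixpoint valid_from (s : St J) (es : list edge) : Prop :=
  match es with
  | [] => True
  | ETemp a t :: es' => tr J a s = Some t /\ valid_from t es'
  | EEpi ag t :: es' => loc J ag s = loc J ag t /\ valid_from t es'
  end.

Definition valid_path (p : path) : Prop := valid_from (pstart p) (pedges p).

Definition is_temporal (e : edge) : Prop :=
  match e with ETemp _ _ => True | EEpi _ _ => False end.

Definition witness_path (s' : St J) (p : path) : Prop :=
  init J (pstart p) /\ Forall is_temporal (pedges p) /\ valid_path p /\ plast p = s'.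

End Paths.
Arguments ETemp {Ag J} a t.
Arguments EEpi {Ag J} ag t.
Arguments mkPath {Ag J} pstart pedges.

Section Rules.
Context {Ag : Type} (I It : IS Ag) (h : St I -> St It) (hA : Act I -> Act It).

Definition config := (path It * (St I -> Prop))%type.

Definition temporal_set (at_ : Act It) (t : St It) (st : St I -> Prop) : St I -> Prop :=
  fun x => (exists a s, hA a = at_ /\ st s /\ tr I a s = Some x) /\ h x = t.

Inductive step_t : config -> config -> Prop :=
| TemporalCheck : forall s at_ t rest st,
    step_t (mkPath s (ETemp at_ t :: rest), st) (mkPath t rest, temporal_set at_ t st).

Inductive star_t : config -> config -> Prop :=
| star_t_refl : forall c, star_t c c
| star_t_step : forall c1 c2 c3, step_t c1 c2 -> star_t c2 c3 -> star_t c1 c3.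

Section WithWitness.
Variable W : St It -> path It -> Prop.

Definition witness_set (t : St It) : St I -> Prop :=
  fun x => exists p X, W t p /\
    star_t (p, fun y => init I y /\ h y = pstart p) (mkPath t [], X) /\ X x.

Definition epistemic_set (ag : Ag) (t : St It) (st : St I -> Prop) : St I -> Prop :=
  fun x => witness_set t x /\ exists s, st s /\ loc I ag s = loc I ag x.

Inductive step_e : config -> config -> Prop :=
| EpistemicCheck : forall s ag t rest st,
    step_e (mkPath s (EEpi ag t :: rest), st) (mkPath t rest, epistemic_set ag t st).

Inductive star : config -> config -> Prop :=
| star_refl : forall c, star c c
| star_step_t : forall c1 c2 c3, step_t c1 c2 -> star c2 c3 -> star c1 c3
| star_step_e : forall c1 c2 c3, step_e c1 c2 -> star c2 c3 -> star c1 c3.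
End WithWitness.

(* concrete trace s_1 ... s_n matching the edges of the abstract path:
   concrete_trace s es ss, where s is the current concrete state and ss the
   following concrete states, one per edge *)
Fixpoint concrete_trace (s : St I) (es : list (edge It)) (ss : list (St I)) : Prop :=
  match es, ss with
  | [], [] => True
  | ETemp at_ t :: es', x :: ss' =>
      h x = t /\ (exists a, hA a = at_ /\ tr I a s = Some x) /\ concrete_trace x es' ss'
  | EEpi ag t :: es', x :: ss' =>
      h x = t /\ loc I ag s = loc I ag x /\ reachable I x /\ concrete_trace x es' ss'
  | _, _ => False
  end.

End Rules.

From Stdlib Require Import List.
Import ListNotations.
Set Implicit Arguments.

(* The proof works backwards along a derivation (pi, st_1) =>^* (s_n, st_n):
   every concrete state produced by a rule has a concrete predecessor in the
   set the rule was applied to.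
   - TemporalCheck: an element of the new set is tau(alpha, s) for some s in
     the old set and some alpha with h_A(alpha) equal to the abstract action,
     and it lies in h^{-1} of the target abstract state.
   - EpistemicCheck: an element of the new set shares the local state of the
     agent with some element of the old set; it lies in the witness set of the
     target, which is built by temporal checks from initial states, so it is
     reachable and projects onto the target (lemma [witness_set_sound]).
   Chaining these facts along the derivation ([derivation_backtrack]) yields
   the concrete trace ending at any chosen element of the nonempty st_n. *)

Lemma last_cons_default (A : Type) (l : list A) (a d : A) :
  last (a :: l) d = last l a.
Proof.
  revert a d. induction l as [|b l IH]; intros a d; [reflexivity|].
  change (last (b :: l) d = last (b :: l) a). now rewrite (IH b d), (IH b a).
Qed.

Section Soundness.
Variables (Ag : Type) (I It : IS Ag).
Variables (h : St I -> St It) (hA : Act I -> Act It).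

Definition reachable_above (t : St It) (X : St I -> Prop) : Prop :=
  forall y, X y -> h y = t /\ reachable I y.

Lemma temporal_set_reachable (at_ : Act It) (s t : St It) (st : St I -> Prop) :
  reachable_above s st -> reachable_above t (temporal_set I It h hA at_ t st).
Proof.
  intros Hst y [[a [x [_ [Hx Htr]]]] Hy].
  split; [exact Hy|].
  eapply reach_step; [apply (Hst x Hx)|exact Htr].
Qed.

Lemma star_t_reachable (c1 c2 : config I It) :
  star_t h hA c1 c2 ->
  reachable_above (pstart (fst c1)) (snd c1) ->
  reachable_above (pstart (fst c2)) (snd c2).
Proof.
  induction 1 as [c|c1 c2 c3 Hstep _ IH]; intro Hc; [exact Hc|].
  apply IH. destruct Hstep. exact (temporal_set_reachable Hc).
Qed.

Lemma witness_set_sound (W : St It -> path It -> Prop) (t : St It) :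
  reachable_above t (witness_set I h hA W t).
Proof.
  intros y [p [X [_ [HX Hy]]]].
  refine (star_t_reachable HX _ y Hy).
  intros z [Hinit Hz]. split; [exact Hz|exact (reach_init I z Hinit)].
Qed.

Lemma derivation_backtrack (W : St It -> path It -> Prop) (c1 c2 : config I It) :
  star h hA W c1 c2 ->
  pedges (fst c2) = [] ->
  (forall y, snd c1 y -> h y = pstart (fst c1)) ->
  forall x, snd c2 x ->
  exists s1 ss, snd c1 s1 /\ last ss s1 = x /\
    concrete_trace I h hA s1 (pedges (fst c1)) ss.
Proof.
  induction 1 as [c|c1 c2 c3 Hstep _ IH|c1 c2 c3 Hstep _ IH];
    intros Hend Habove x Hx.
  - exists x, []. rewrite Hend. simpl. auto.
  - destruct Hstep as [s at_ t rest st].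
    destruct (IH Hend (fun y Hy => proj2 Hy) x Hx) as [s2 [ss [Hs2 [Hlast Htrace]]]].
    destruct Hs2 as [[a [s1 [Ha [Hs1 Htr]]]] Hs2t].
    exists s1, (s2 :: ss). rewrite last_cons_default.
    split; [exact Hs1|]. split; [exact Hlast|].
    simpl. split; [exact Hs2t|]. split; [exists a; auto|exact Htrace].
  - destruct Hstep as [s ag t rest st].
    assert (Hwit : reachable_above t (epistemic_set I h hA W ag t st))
      by (intros y [Hy _]; exact (witness_set_sound Hy)).
    destruct (IH Hend (fun y Hy => proj1 (Hwit y Hy)) x Hx)
      as [s2 [ss [Hs2 [Hlast Htrace]]]].
    destruct (Hwit s2 Hs2) as [Hs2t Hreach].
    destruct Hs2 as [_ [s1 [Hs1 Hloc]]].
    exists s1, (s2 :: ss). rewrite last_cons_default.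
    split; [exact Hs1|]. split; [exact Hlast|].
    simpl. auto.
Qed.

End Soundness.

Theorem proposition4 (Ag : Type) (I It : IS Ag)
  (h : St I -> St It) (hA : Act I -> Act It)
  (W : St It -> path It -> Prop)
  (HW : forall t p, W t p -> witness_path t p)
  (pi : path It) (Hpi : valid_path pi)
  (st1 stn : St I -> Prop)
  (Hst1 : forall x, st1 x -> h x = pstart pi)
  (Hstar : star h hA W (pi, st1) (mkPath (plast pi) [], stn))
  (Hne : exists x, stn x) :
  exists (s1 : St I) (ss : list (St I)),
    st1 s1 /\ h s1 = pstart pi /\ stn (last ss s1) /\
    concrete_trace I h hA s1 (pedges pi) ss.
Proof.
  destruct Hne as [x Hx].
  destruct (derivation_backtrack Hstar eq_refl Hst1 x Hx)
    as [s1 [ss [Hs1 [Hlast Htrace]]]].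
  exists s1, ss. rewrite Hlast. auto.
Qed.
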